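(* Let $\alpha\neq0$ and $b<0$. Then the set $\mathcal C=\bigcup_{u\in B}r_u$ is the unique control set of the system $\dot x=u\alpha x$, $\dot y=by+ux$ on $G$. Moreover, $\mathcal C=\operatorname{cl}\mathcal O^+(p)$ for every $p\in\mathcal C$.
   Context: Let $G=\{(x,y)\in\mathbb{R}^2:x>0\}$. Fix $\Omega=[u_*,u^*]$ with $u_*<0<u^*$. The admissible controls $\mathcal U$ are the piecewise constant functions $\mathbb{R}\to\Omega$. We write $\varphi(t,p,u)$ for the solutions and $\mathcal O^+(p)=\{\varphi(t,p,u):t\ge0,u\in\mathcal U\}$; closures are taken in $G$. For $u\in\mathbb{R}$ with $u\alpha\neq b$, set $m_u=\frac{u}{u\alpha-b}$ and $r_u=\{(x,y)\in G:y=m_ux\}$. Let $B=\{u\in\Omega:u\alpha-b>0\}$. A control set is a subset $\mathcal C\subset G$ that is maximal with respect to inclusion among the sets satisfying both of the following: (i) every $p\in\mathcal C$ admits $u\in\mathcal U$ with $\varphi(t,p,u)\in\mathcal C$ for all $t\ge0$; (ii) $\mathcal C\subset\operatorname{cl}\mathcal O^+(p)$ for all $p\in\mathcal C$. (This system is the image of $\Sigma$ with $\alpha(a\alpha+b\beta)\neq0$, $b<0$ under the map $(x,y)\mapsto(x,\gamma^{-1}(a(x-1)+by))$, where $\gamma=a\alpha+b\beta$.) *)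

From Stdlib Require Import Reals Lra.
Open Scope R_scope.

Definition pt := (R * R)%type.

Definition inG (p : pt) : Prop := 0 < fst p.

Definition piecewise_constant (u : R -> R) : Prop :=
  forall a c, a < c ->
    exists (n : nat) (t : nat -> R),
      t O = a /\ t n = c /\
      (forall i, (i < n)%nat -> t i < t (S i)) /\
      (forall i, (i < n)%nat ->
         exists v, forall s, t i < s < t (S i) -> u s = v).

Definition admissible (ul uh : R) (u : R -> R) : Prop :=
  (forall t, ul <= u t <= uh) /\ piecewise_constant u.

Definition locally_const (u : R -> R) (t : R) : Prop :=
  exists d, 0 < d /\ forall s, Rabs (s - t) < d -> u s = u t.

(* phi is the solution (for t >= 0) of  x' = u alpha x,  y' = b y + u x
   starting at p under control u: continuous, and satisfying the ODE at every
   time t > 0 where the control is locally constant (i.e. away from switching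
   times). *)
Definition is_solution (alpha b : R) (u : R -> R) (p : pt) (phi : R -> pt) : Prop :=
  phi 0 = p /\
  (forall t, 0 <= t ->
     continuity_pt (fun s => fst (phi s)) t /\
     continuity_pt (fun s => snd (phi s)) t) /\
  (forall t, 0 < t -> locally_const u t ->
     derivable_pt_lim (fun s => fst (phi s)) t (u t * alpha * fst (phi t)) /\
     derivable_pt_lim (fun s => snd (phi s)) t (b * snd (phi t) + u t * fst (phi t))).

Definition orbit_plus (alpha b ul uh : R) (p : pt) (q : pt) : Prop :=
  exists u phi T, admissible ul uh u /\ is_solution alpha b u p phi /\
                  0 <= T /\ phi T = q.

Definition closureG (S : pt -> Prop) (q : pt) : Prop :=
  inG q /\
  forall eps, 0 < eps ->
    exists s, S s /\ Rabs (fst s - fst q) < eps /\ Rabs (snd s - snd q) < eps.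

Definition control_set_conditions (alpha b ul uh : R) (C : pt -> Prop) : Prop :=
  (forall p, C p -> inG p) /\
  (forall p, C p ->
     exists u phi, admissible ul uh u /\ is_solution alpha b u p phi /\
                   forall t, 0 <= t -> C (phi t)) /\
  (forall p q, C p -> C q -> closureG (orbit_plus alpha b ul uh p) q).

Definition is_control_set (alpha b ul uh : R) (C : pt -> Prop) : Prop :=
  control_set_conditions alpha b ul uh C /\
  forall D, control_set_conditions alpha b ul uh D ->
    (forall p, C p -> D p) -> forall p, D p -> C p.

Definition m_u (alpha b u : R) : R := u / (u * alpha - b).

Definition inB (alpha b ul uh u : R) : Prop :=
  ul <= u <= uh /\ u * alpha - b > 0.

Definition r_u (alpha b u : R) (p : pt) : Prop :=
  inG p /\ snd p = m_u alpha b u * fst p.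

Definition Cset (alpha b ul uh : R) (p : pt) : Prop :=
  exists u, inB alpha b ul uh u /\ r_u alpha b u p.

From Stdlib Require Import Reals Lra Lia.
From Coquelicot Require Import Coquelicot.
Open Scope R_scope.

(* For a control value k put K_k(x, y) = k x + (b - k alpha) y.  It vanishes
   exactly on the line r_k, and along every solution
   d/dt (e^(-bt) K_k) = e^(-bt) b x (u - k).  As b < 0 and x > 0, the weighted
   quantity e^(-bt) K_{u^*} never decreases and e^(-bt) K_{u_*} never
   increases.  Hence the cone C = { x > 0, K_{u_*} <= 0 <= K_{u^*} }, which is
   the union of the lines r_u, u in B, is forward invariant and closed in G,
   and a point outside C cannot lie in the closure of the orbit of its own
   future, since every trajectory moves it strictly towards C.  Conversely
   every point q of C on the line r_v is approximately reached from any point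
   of G: a control w with w alpha of the appropriate sign steers x to
   x_q e^(-v alpha T), after which the constant control v brings x to x_q in
   time T while y approaches the line r_v at exponential rate. *)

(* The Stdlib lemmas are stated for [(f * g)%F]; these versions match
   lambda-terms directly. *)
Lemma derivable_pt_lim_mult_fun f g x lf lg :
  derivable_pt_lim f x lf -> derivable_pt_lim g x lg ->
  derivable_pt_lim (fun s => f s * g s) x (lf * g x + f x * lg).
Proof. exact (derivable_pt_lim_mult f g x lf lg). Qed.

Lemma derivable_pt_lim_plus_fun f g x lf lg :
  derivable_pt_lim f x lf -> derivable_pt_lim g x lg ->
  derivable_pt_lim (fun s => f s + g s) x (lf + lg).
Proof. exact (derivable_pt_lim_plus f g x lf lg). Qed.

Lemma derivable_pt_lim_scal_fun c f x l :
  derivable_pt_lim f x l -> derivable_pt_lim (fun s => c * f s) x (c * l).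
Proof. exact (derivable_pt_lim_scal f c x l). Qed.

Lemma derivable_pt_lim_exp_scal k x :
  derivable_pt_lim (fun s => exp (k * s)) x (k * exp (k * x)).
Proof. apply is_derive_Reals. auto_derive; auto. ring. Qed.

Lemma derivable_pt_lim_eq_value f x l l' :
  derivable_pt_lim f x l -> l = l' -> derivable_pt_lim f x l'.
Proof. intros H <-; exact H. Qed.

Lemma continuity_pt_mult_fun f g x :
  continuity_pt f x -> continuity_pt g x -> continuity_pt (fun s => f s * g s) x.
Proof. exact (continuity_pt_mult f g x). Qed.

Lemma continuity_pt_plus_fun f g x :
  continuity_pt f x -> continuity_pt g x -> continuity_pt (fun s => f s + g s) x.
Proof. exact (continuity_pt_plus f g x). Qed.

Lemma continuity_pt_minus_fun f g x :
  continuity_pt f x -> continuity_pt g x -> continuity_pt (fun s => f s - g s) x.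
Proof. exact (continuity_pt_minus f g x). Qed.

Lemma continuity_pt_opp_fun f x :
  continuity_pt f x -> continuity_pt (fun s => - f s) x.
Proof. exact (continuity_pt_opp f x). Qed.

Lemma continuity_pt_cst c x : continuity_pt (fun _ => c) x.
Proof. apply continuity_pt_const. intros ? ?; reflexivity. Qed.

Lemma continuity_pt_exp_scal k f x :
  continuity_pt f x -> continuity_pt (fun s => exp (k * f s)) x.
Proof.
  intros Hf. apply (continuity_pt_comp f (fun z => exp (k * z))); auto.
  apply derivable_continuous_pt. exists (k * exp (k * f x)).
  apply derivable_pt_lim_exp_scal.
Qed.

Lemma exp_le_mono x y : x <= y -> exp x <= exp y.
Proof. intros [H|<-]; [left; apply exp_increasing; exact H | lra]. Qed.

Lemma nondecreasing_on_interval (f : R -> R) a c : a < c ->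
  (forall t, a <= t <= c -> continuity_pt f t) ->
  (forall t, a < t < c -> exists l, derivable_pt_lim f t l /\ 0 <= l) ->
  f a <= f c.
Proof.
  intros Hac Hc Hd.
  set (df := fun x => if Rlt_dec a x then if Rlt_dec x c then Derive f x else 0 else 0).
  assert (Hdf : forall x, a < x < c -> is_derive f x (df x) /\ 0 <= df x).
  { intros x Hx. destruct (Hd x Hx) as [l [Hl Hl0]]. apply is_derive_Reals in Hl.
    unfold df. destruct (Rlt_dec a x); [|lra]. destruct (Rlt_dec x c); [|lra].
    rewrite (is_derive_unique _ _ _ Hl). auto. }
  assert (Hdf0 : forall x, 0 <= df x).
  { intros x. destruct (Rlt_dec a x), (Rlt_dec x c); try (unfold df; repeat destruct Rlt_dec; lra).
    apply Hdf. lra. }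
  destruct (MVT_gen f a c df) as [x [_ He]].
  - intros x Hx. rewrite Rmin_left, Rmax_right in Hx by lra. apply Hdf, Hx.
  - intros x Hx. rewrite Rmin_left, Rmax_right in Hx by lra. apply Hc, Hx.
  - pose proof (Hdf0 x). nra.
Qed.

Lemma chain_le (f : R -> R) (n : nat) (t : nat -> R) :
  (forall i, (i < n)%nat -> f (t i) <= f (t (S i))) -> f (t O) <= f (t n).
Proof.
  induction n as [|n IH]; intros H; [lra|].
  apply Rle_trans with (f (t n)); [apply IH; intros; apply H|apply H]; lia.
Qed.

Lemma increasing_seq_ge_first (n : nat) (t : nat -> R) :
  (forall i, (i < n)%nat -> t i < t (S i)) -> forall i, (i <= n)%nat -> t O <= t i.
Proof.
  intros H i. induction i as [|i IH]; intros Hi; [lra|].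
  apply Rle_trans with (t i); [apply IH; lia | left; apply H; lia].
Qed.

(* Between two switching times the control is locally constant, so there the
   mean value theorem applies. *)
Lemma nondecreasing_off_switches (u F : R -> R) :
  piecewise_constant u ->
  (forall t, 0 <= t -> continuity_pt F t) ->
  (forall t, 0 < t -> locally_const u t -> exists l, derivable_pt_lim F t l /\ 0 <= l) ->
  forall T, 0 <= T -> F 0 <= F T.
Proof.
  intros Hpc Hc Hd T [HT|<-]; [|lra].
  destruct (Hpc 0 T HT) as [n [t [H0 [Hn [Hinc Hcst]]]]].
  rewrite <- H0, <- Hn. apply chain_le. intros i Hi.
  assert (Hge : 0 <= t i) by (rewrite <- H0; apply increasing_seq_ge_first with n; auto; lia).
  destruct (Hcst i Hi) as [v Hv].
  apply nondecreasing_on_interval; [apply Hinc; exact Hi| intros s Hs; apply Hc; lra|].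
  intros s Hs. apply Hd; [lra|].
  exists (Rmin (s - t i) (t (S i) - s)). split; [apply Rmin_glb_lt; lra|].
  intros s' Hs'. apply Rabs_def2 in Hs'.
  pose proof (Rmin_l (s - t i) (t (S i) - s)). pose proof (Rmin_r (s - t i) (t (S i) - s)).
  rewrite (Hv s), (Hv s'); lra.
Qed.

Lemma closureG_linear_lower (S : pt -> Prop) (a d c : R) q :
  (forall s, S s -> c <= a * fst s + d * snd s) -> closureG S q ->
  c <= a * fst q + d * snd q.
Proof.
  intros HS [_ Hcl].
  destruct (Rle_or_lt c (a * fst q + d * snd q)) as [|Hlt]; [assumption|exfalso].
  set (M := Rabs a + Rabs d + 1).
  set (g := c - (a * fst q + d * snd q)).
  assert (HM : 0 < M) by (unfold M; pose proof (Rabs_pos a); pose proof (Rabs_pos d); lra).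
  destruct (Hcl (g / M)) as [s [Hs [H1 H2]]]; [apply Rdiv_lt_0_compat; unfold g; lra|].
  specialize (HS s Hs).
  assert (Hgap : Rabs (a * (fst s - fst q) + d * (snd s - snd q)) <= (M - 1) * (g / M)).
  { eapply Rle_trans; [apply Rabs_triang|]. rewrite !Rabs_mult.
    assert (Rabs a * Rabs (fst s - fst q) <= Rabs a * (g / M))
      by (apply Rmult_le_compat_l; [apply Rabs_pos|lra]).
    assert (Rabs d * Rabs (snd s - snd q) <= Rabs d * (g / M))
      by (apply Rmult_le_compat_l; [apply Rabs_pos|lra]).
    unfold M at 1. lra. }
  assert (Hlt' : (M - 1) * (g / M) < g).
  { replace ((M - 1) * (g / M)) with (g - g / M) by (field; lra).
    assert (0 < g / M) by (apply Rdiv_lt_0_compat; unfold g; lra). lra. }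
  pose proof (Rle_abs (a * (fst s - fst q) + d * (snd s - snd q))).
  assert (Hg : g = c - (a * fst q + d * snd q)) by reflexivity. lra.
Qed.

Section System.

Variables alpha b ul uh : R.
Hypothesis Hb : b < 0.
Hypothesis Hul : ul < 0.
Hypothesis Huh : 0 < uh.
Hypothesis Halpha : alpha <> 0.

(* Since c dominates |2 u alpha|, x^2 e^(c t) is nondecreasing, so x never
   reaches 0. *)
Lemma solution_fst_pos u p phi :
  admissible ul uh u -> is_solution alpha b u p phi -> 0 < fst p ->
  forall t, 0 <= t -> 0 < fst (phi t).
Proof.
  intros Hadm [H0 [Hc Hd]] Hp.
  set (X := fun s => fst (phi s)).
  set (c := 2 * Rabs alpha * (Rabs ul + Rabs uh)).
  assert (Hmono : forall t, 0 <= t -> X 0 * X 0 * exp (c * 0) <= X t * X t * exp (c * t)).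
  { apply (nondecreasing_off_switches u (fun s => X s * X s * exp (c * s))); [apply Hadm| |].
    - intros t Ht. destruct (Hc t Ht) as [HX _].
      apply continuity_pt_mult_fun; [apply continuity_pt_mult_fun; exact HX|].
      apply (continuity_pt_exp_scal c (fun s => s)), derivable_continuous_pt, derivable_pt_id.
    - intros t Ht Hl. destruct (Hd t Ht Hl) as [HX _].
      eexists. split.
      + apply derivable_pt_lim_mult_fun;
          [apply derivable_pt_lim_mult_fun; exact HX | apply derivable_pt_lim_exp_scal].
      + assert (Hu : Rabs (u t) <= Rabs ul + Rabs uh)
          by (destruct (proj1 Hadm t); unfold Rabs; repeat destruct Rcase_abs; lra).
        assert (Hua : - (u t * alpha) <= Rabs (u t) * Rabs alpha)
          by (rewrite <- Rabs_mult, <- Rabs_Ropp; apply Rle_abs).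
        assert (Hrate : 0 <= 2 * (u t * alpha) + c).
        { pose proof (Rabs_pos alpha). unfold c. nra. }
        cbv beta. match goal with |- 0 <= ?e =>
          replace e with (X t * X t * exp (c * t) * (2 * (u t * alpha) + c)) by (unfold X; ring)
        end.
        apply Rmult_le_pos; [|exact Hrate].
        apply Rmult_le_pos; [apply Rle_0_sqr | left; apply exp_pos]. }
  assert (Hne : forall t, 0 <= t -> X t <> 0).
  { intros t Ht HX. specialize (Hmono t Ht).
    rewrite HX, Rmult_0_r, exp_0 in Hmono. unfold X in Hmono. rewrite H0 in Hmono. nra. }
  intros t Ht. fold X.
  destruct (Rlt_or_le 0 (X t)) as [Hx|[Hx|Hx]]; [exact Hx| |exfalso; exact (Hne t Ht Hx)].
  exfalso. destruct Ht as [Ht|<-]; [|unfold X in Hx; rewrite H0 in Hx; lra].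
  destruct (Ranalysis5.IVT_interv (fun s => - X s) 0 t) as [z [Hz Hz0]]; [| exact Ht | | |].
  - intros a Ha. apply continuity_pt_opp, Hc. lra.
  - unfold X. rewrite H0. lra.
  - lra.
  - apply (Hne z ltac:(lra)). lra.
Qed.

Definition K (k : R) (p : pt) : R := k * fst p + (b - k * alpha) * snd p.

Definition dominates (sign k : R) : Prop :=
  forall v, ul <= v <= uh -> 0 <= sign * (k - v).

Lemma dominates_upper : dominates 1 uh.
Proof. intros v Hv. lra. Qed.

Lemma dominates_lower : dominates (-1) ul.
Proof. intros v Hv. lra. Qed.

Lemma K_weighted_derivable k u p phi t :
  is_solution alpha b u p phi -> 0 < t -> locally_const u t ->
  derivable_pt_lim (fun s => K k (phi s) * exp (- b * s)) t
    (exp (- b * t) * (b * fst (phi t) * (u t - k))).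
Proof.
  intros [_ [_ Hd]] Ht Hl. destruct (Hd t Ht Hl) as [HX HY]. unfold K.
  eapply derivable_pt_lim_eq_value.
  - apply derivable_pt_lim_mult_fun; [|apply derivable_pt_lim_exp_scal].
    apply derivable_pt_lim_plus_fun; apply derivable_pt_lim_scal_fun; [exact HX|exact HY].
  - cbv beta. ring.
Qed.

Lemma K_weighted_continuous k u p phi t :
  is_solution alpha b u p phi -> 0 <= t ->
  continuity_pt (fun s => K k (phi s) * exp (- b * s)) t.
Proof.
  intros [_ [Hc _]] Ht. destruct (Hc t Ht) as [HX HY]. unfold K.
  apply continuity_pt_mult_fun.
  - apply continuity_pt_plus_fun; apply continuity_pt_mult_fun;
      auto using continuity_pt_cst.
  - apply (continuity_pt_exp_scal (- b) (fun s => s)), derivable_continuous_pt, derivable_pt_id.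
Qed.

Lemma K_monotone sign k u p phi :
  dominates sign k -> admissible ul uh u -> is_solution alpha b u p phi -> 0 < fst p ->
  forall T, 0 <= T -> sign * K k p * exp (b * T) <= sign * K k (phi T).
Proof.
  intros Hdom Hadm Hsol Hp T HT.
  assert (Hle : sign * (K k (phi 0) * exp (- b * 0)) <= sign * (K k (phi T) * exp (- b * T))).
  { apply (nondecreasing_off_switches u (fun s => sign * (K k (phi s) * exp (- b * s))));
      [apply Hadm | | | exact HT].
    - intros t Ht. apply continuity_pt_mult_fun; [apply continuity_pt_cst|].
      exact (K_weighted_continuous k u p phi t Hsol Ht).
    - intros t Ht Hl. eexists. split.
      + apply derivable_pt_lim_scal_fun, (K_weighted_derivable k u p phi t Hsol Ht Hl).
      + assert (0 < fst (phi t)) by (apply (solution_fst_pos u p phi); auto; lra).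
        assert (Hs := Hdom (u t) (proj1 Hadm t)).
        pose proof (exp_pos (- b * t)).
        replace (sign * (exp (- b * t) * (b * fst (phi t) * (u t - k)))) with
          (exp (- b * t) * ((- b) * fst (phi t)) * (sign * (k - u t))) by ring.
        apply Rmult_le_pos; [apply Rmult_le_pos|]; nra. }
  destruct Hsol as [H0 _]. rewrite H0, Rmult_0_r, exp_0, Rmult_1_r in Hle.
  apply Rmult_le_compat_r with (r := exp (b * T)) in Hle; [|left; apply exp_pos].
  replace (sign * (K k (phi T) * exp (- b * T)) * exp (b * T)) with
    (sign * K k (phi T) * exp (- b * T + b * T)) in Hle by (rewrite exp_plus; ring).
  replace (- b * T + b * T) with 0 in Hle by ring.
  rewrite exp_0, Rmult_1_r in Hle. exact Hle.
Qed.

Lemma K_orbit_lower sign k p s :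
  dominates sign k -> 0 < fst p -> orbit_plus alpha b ul uh p s ->
  Rmin (sign * K k p) 0 <= sign * K k s.
Proof.
  intros Hdom Hp [u [phi [T [Hadm [Hsol [HT <-]]]]]].
  pose proof (K_monotone sign k u p phi Hdom Hadm Hsol Hp T HT).
  pose proof (exp_pos (b * T)).
  assert (exp (b * T) <= 1) by (rewrite <- exp_0; apply exp_le_mono; nra).
  unfold Rmin. destruct Rle_dec; nra.
Qed.

Lemma K_closure_lower sign k (S : pt -> Prop) c q :
  (forall s, S s -> c <= sign * K k s) -> closureG S q -> c <= sign * K k q.
Proof.
  intros HS Hq.
  assert (E : forall s, sign * K k s = sign * k * fst s + sign * (b - k * alpha) * snd s)
    by (intros; unfold K; ring).
  rewrite E. apply (closureG_linear_lower S); [|exact Hq].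
  intros s Hs. rewrite <- E. auto.
Qed.

(* A point in the closure of the orbit of its own future cannot be strictly
   on the wrong side of K k = 0: the future has moved towards it by the
   factor e^b < 1. *)
Lemma K_nonneg_of_recurrent sign k u p phi :
  dominates sign k -> admissible ul uh u -> is_solution alpha b u p phi -> 0 < fst p ->
  closureG (orbit_plus alpha b ul uh (phi 1)) p -> 0 <= sign * K k p.
Proof.
  intros Hdom Hadm Hsol Hp Hcl.
  assert (Hr : 0 < fst (phi 1)) by (apply (solution_fst_pos u p phi); auto; lra).
  pose proof (K_monotone sign k u p phi Hdom Hadm Hsol Hp 1 ltac:(lra)) as Hdecay.
  rewrite Rmult_1_r in Hdecay.
  assert (Hback : Rmin (sign * K k (phi 1)) 0 <= sign * K k p)
    by exact (K_closure_lower sign k _ _ _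
                (fun s Hs => K_orbit_lower sign k _ s Hdom Hr Hs) Hcl).
  assert (Heb : exp b < 1) by (rewrite <- exp_0; apply exp_increasing; lra).
  pose proof (exp_pos b).
  revert Hback. unfold Rmin. destruct Rle_dec; intros; nra.
Qed.

Definition cone (p : pt) : Prop := 0 < fst p /\ K ul p <= 0 <= K uh p.

Lemma r_u_iff_K u p : u * alpha - b <> 0 ->
  (snd p = m_u alpha b u * fst p <-> K u p = 0).
Proof.
  intros Hd. unfold K, m_u. split; intros H.
  - rewrite H. field. exact Hd.
  - apply Rmult_eq_reg_l with (u * alpha - b); [|exact Hd].
    field_simplify; [lra|exact Hd].
Qed.

Lemma K_on_line u k p : K u p = 0 -> (u * alpha - b) * K k p = b * fst p * (u - k).
Proof.
  intros H.
  replace ((u * alpha - b) * K k p) with (b * fst p * (u - k) + (k * alpha - b) * K u p)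
    by (unfold K; ring).
  rewrite H. ring.
Qed.

Lemma cone_of_Cset p : Cset alpha b ul uh p -> cone p.
Proof.
  intros [u [[Hu Hd] [Hx Hy]]]. unfold inG in Hx.
  apply r_u_iff_K in Hy; [|lra].
  pose proof (K_on_line u ul p Hy). pose proof (K_on_line u uh p Hy).
  assert (0 <= (- b) * fst p) by nra.
  split; [exact Hx | split]; nra.
Qed.

(* K k p is affine in k with slope x - alpha y, so between the two
   extremal controls there is a unique u with p on r_u. *)
Lemma Cset_of_cone p : cone p -> Cset alpha b ul uh p.
Proof.
  intros [Hx [HL HH]].
  set (z := fst p - alpha * snd p).
  assert (EK : forall k, K k p = k * z + b * snd p) by (intros; unfold K, z; ring).
  rewrite EK in HL, HH.
  assert (Hz : 0 < z).
  { assert (0 <= z) as [|Hz0] by nra; [assumption|].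
    rewrite <- Hz0 in HL, HH.
    assert (snd p = 0) by nra. unfold z in Hz0. nra. }
  set (u := - b * snd p / z).
  assert (Hu : u * z = - b * snd p) by (unfold u; field; lra).
  assert (Hdet : (u * alpha - b) * z = - b * fst p) by (unfold z in *; nra).
  exists u. split.
  - repeat split; nra.
  - split; [exact Hx|]. apply r_u_iff_K; [nra|]. rewrite EK. lra.
Qed.

Lemma cone_orbit_invariant p s : cone p -> orbit_plus alpha b ul uh p s -> cone s.
Proof.
  intros [Hx [HL HH]] Hs.
  pose proof (K_orbit_lower 1 uh p s dominates_upper Hx Hs) as Hup.
  pose proof (K_orbit_lower (-1) ul p s dominates_lower Hx Hs) as Hlow.
  destruct Hs as [u [phi [T [Hadm [Hsol [HT <-]]]]]].
  split; [apply (solution_fst_pos u p phi); auto|].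
  revert Hup Hlow. unfold Rmin. destruct Rle_dec; destruct Rle_dec; intros; lra.
Qed.

Lemma cone_closure (S : pt -> Prop) q :
  (forall s, S s -> cone s) -> closureG S q -> cone q.
Proof.
  intros HS Hq. split; [apply Hq|split].
  - assert (0 <= -1 * K ul q); [|lra].
    apply (K_closure_lower (-1) ul S); [|exact Hq].
    intros s Hs. destruct (HS s Hs) as [_ [? _]]. lra.
  - assert (0 <= 1 * K uh q); [|lra].
    apply (K_closure_lower 1 uh S); [|exact Hq].
    intros s Hs. destruct (HS s Hs) as [_ [_ ?]]. lra.
Qed.

Lemma control_set_conditions_sub_cone (D : pt -> Prop) :
  control_set_conditions alpha b ul uh D -> forall p, D p -> cone p.
Proof.
  intros [HG [Hinv Hrec]] p Hp.
  destruct (Hinv p Hp) as [u [phi [Hadm [Hsol Hstay]]]].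
  assert (Hx : 0 < fst p) by exact (HG p Hp).
  assert (Hcl := Hrec (phi 1) p (Hstay 1 ltac:(lra)) Hp).
  pose proof (K_nonneg_of_recurrent 1 uh u p phi dominates_upper Hadm Hsol Hx Hcl).
  pose proof (K_nonneg_of_recurrent (-1) ul u p phi dominates_lower Hadm Hsol Hx Hcl).
  split; [exact Hx|lra].
Qed.

(* The solution under the constant control u (when u alpha <> b): x grows at
   rate u alpha, and y relaxes towards the line r_u at rate b. *)
Definition flow (u : R) (p : pt) (t : R) : pt :=
  (fst p * exp (u * alpha * t),
   m_u alpha b u * fst p * exp (u * alpha * t)
   + (snd p - m_u alpha b u * fst p) * exp (b * t)).

Lemma flow_0 u p : flow u p 0 = p.
Proof. destruct p as [x y]. unfold flow; simpl. rewrite !Rmult_0_r, exp_0. f_equal; ring. Qed.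

Lemma flow_add u p t1 t2 : flow u (flow u p t1) t2 = flow u p (t1 + t2).
Proof.
  unfold flow; simpl. rewrite !Rmult_plus_distr_l, !exp_plus. f_equal; ring.
Qed.

Lemma flow_deviation u p t :
  snd (flow u p t) - m_u alpha b u * fst (flow u p t)
  = (snd p - m_u alpha b u * fst p) * exp (b * t).
Proof. unfold flow; simpl. ring. Qed.

Lemma flow_derivable u p c t : u * alpha - b <> 0 ->
  derivable_pt_lim (fun s => fst (flow u p (s - c))) t (u * alpha * fst (flow u p (t - c))) /\
  derivable_pt_lim (fun s => snd (flow u p (s - c))) t
    (b * snd (flow u p (t - c)) + u * fst (flow u p (t - c))).
Proof.
  intros Hd. unfold flow, m_u; simpl. split; apply is_derive_Reals; auto_derive; auto;
    unfold Rminus; field; exact Hd.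
Qed.

Lemma ode_of_flow_near u (phi : R -> pt) q c a d t :
  u * alpha - b <> 0 -> a < t < d -> (forall s, a < s < d -> phi s = flow u q (s - c)) ->
  derivable_pt_lim (fun s => fst (phi s)) t (u * alpha * fst (phi t)) /\
  derivable_pt_lim (fun s => snd (phi s)) t (b * snd (phi t) + u * fst (phi t)).
Proof.
  intros Hd Ht Heq. destruct (flow_derivable u q c t Hd) as [HX HY].
  rewrite (Heq t Ht). split.
  - apply (derivable_pt_lim_locally_ext (fun s => fst (flow u q (s - c))) _ t a d _ Ht);
      [|exact HX].
    intros s Hs. rewrite Heq; auto.
  - apply (derivable_pt_lim_locally_ext (fun s => snd (flow u q (s - c))) _ t a d _ Ht);
      [|exact HY].
    intros s Hs. rewrite Heq; auto.
Qed.

Section Switch.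

Variables (w v tau : R) (p : pt).

Definition switch_control (s : R) : R := if Rlt_dec s tau then w else v.

(* [Rmin s tau] and [Rmax (s - tau) 0], written through the continuous [Rabs]. *)
Definition time_before (s : R) : R := (s + tau - Rabs (s - tau)) / 2.
Definition time_after (s : R) : R := (s - tau + Rabs (s - tau)) / 2.

Definition switch_path (s : R) : pt := flow v (flow w p (time_before s)) (time_after s).

Lemma switch_path_before s : s <= tau -> switch_path s = flow w p s.
Proof.
  intros H. unfold switch_path, time_before, time_after. rewrite Rabs_left1 by lra.
  replace ((s + tau - - (s - tau)) / 2) with s by field.
  replace ((s - tau + - (s - tau)) / 2) with 0 by field. apply flow_0.
Qed.

Lemma switch_path_after s : tau <= s -> switch_path s = flow v (flow w p tau) (s - tau).
Proof.
  intros H. unfold switch_path, time_before, time_after. rewrite Rabs_right by lra.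
  f_equal; [f_equal|]; field.
Qed.

Lemma switch_path_same s : w = v -> switch_path s = flow w p s.
Proof.
  intros Hwv. destruct (Rle_or_lt s tau) as [Hs|Hs]; [apply switch_path_before; lra|].
  rewrite switch_path_after, <- Hwv, flow_add by lra. f_equal. ring.
Qed.

Lemma switch_control_admissible ul' uh' :
  ul' <= w <= uh' -> ul' <= v <= uh' -> admissible ul' uh' switch_control.
Proof.
  intros Hw Hv. split; [intros t; unfold switch_control; destruct Rlt_dec; auto|].
  intros a c Hac.
  assert (Hconst : forall lo hi, lo < hi -> (hi <= tau \/ tau <= lo) ->
            exists v', forall s, lo < s < hi -> switch_control s = v').
  { intros lo hi _ [Hh|Hl]; [exists w|exists v]; intros s Hs; unfold switch_control;
      destruct Rlt_dec; lra. }
  destruct (Rlt_dec a tau); [destruct (Rlt_dec tau c)|].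
  1: exists 2%nat, (fun i => match i with O => a | S O => tau | _ => c end).
  2,3: exists 1%nat, (fun i => match i with O => a | _ => c end).
  all: split; [reflexivity|split; [reflexivity|split]].
  all: intros [|[|i]] Hi; try lia; try lra; apply Hconst; lra.
Qed.

Lemma continuity_time_before s : continuity_pt time_before s.
Proof.
  unfold time_before. apply (continuity_pt_mult _ (fun _ => / 2)); [|apply continuity_pt_cst].
  apply continuity_pt_minus_fun.
  - apply continuity_pt_plus_fun; [apply continuity_pt_id|apply continuity_pt_cst].
  - apply (continuity_pt_comp (fun z => z - tau) Rabs); [|apply Rcontinuity_abs].
    apply continuity_pt_minus_fun; [apply continuity_pt_id|apply continuity_pt_cst].
Qed.

Lemma continuity_time_after s : continuity_pt time_after s.
Proof.
  unfold time_after. apply (continuity_pt_mult _ (fun _ => / 2)); [|apply continuity_pt_cst].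
  apply continuity_pt_plus_fun.
  - apply continuity_pt_minus_fun; [apply continuity_pt_id|apply continuity_pt_cst].
  - apply (continuity_pt_comp (fun z => z - tau) Rabs); [|apply Rcontinuity_abs].
    apply continuity_pt_minus_fun; [apply continuity_pt_id|apply continuity_pt_cst].
Qed.

Lemma switch_path_continuous s :
  continuity_pt (fun z => fst (switch_path z)) s /\
  continuity_pt (fun z => snd (switch_path z)) s.
Proof.
  unfold switch_path, flow; simpl. split;
  repeat first
    [ apply continuity_time_before | apply continuity_time_after | apply continuity_pt_cst
    | apply continuity_pt_exp_scal | apply continuity_pt_plus_fun
    | apply continuity_pt_minus_fun | apply continuity_pt_opp_fun
    | apply continuity_pt_mult_fun ].
Qed.

Lemma switch_path_solution :
  w * alpha - b <> 0 -> v * alpha - b <> 0 -> 0 <= tau ->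
  is_solution alpha b switch_control p switch_path.
Proof.
  intros Hdw Hdv Htau. split; [|split].
  - rewrite switch_path_before by lra. apply flow_0.
  - intros t _. apply switch_path_continuous.
  - intros t Ht Hl.
    destruct (Rtotal_order t tau) as [Hlt|[Heq|Hgt]].
    + replace (switch_control t) with w by (unfold switch_control; destruct Rlt_dec; lra).
      apply (ode_of_flow_near w _ p 0 (t - 1) tau t Hdw ltac:(lra)).
      intros s Hs. rewrite Rminus_0_r. apply switch_path_before. lra.
    + replace (switch_control t) with v by (unfold switch_control; destruct Rlt_dec; lra).
      assert (Hwv : w = v).
      { destruct Hl as [d [Hd Hcd]].
        assert (E := Hcd (t - d / 2) ltac:(rewrite Rabs_left; lra)).
        unfold switch_control in E. destruct (Rlt_dec (t - d / 2) tau), (Rlt_dec t tau); lra. }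
      rewrite <- Hwv. apply (ode_of_flow_near w _ p 0 (t - 1) (t + 1) t Hdw ltac:(lra)).
      intros s _. rewrite Rminus_0_r. apply switch_path_same, Hwv.
    + replace (switch_control t) with v by (unfold switch_control; destruct Rlt_dec; lra).
      apply (ode_of_flow_near v _ (flow w p tau) tau tau (t + 1) t Hdv ltac:(lra)).
      intros s Hs. apply switch_path_after. lra.
Qed.

End Switch.

Lemma orbit_switch p w v tau T :
  ul <= w <= uh -> ul <= v <= uh -> w * alpha - b <> 0 -> v * alpha - b <> 0 ->
  0 <= tau -> 0 <= T -> orbit_plus alpha b ul uh p (flow v (flow w p tau) T).
Proof.
  intros Hw Hv Hdw Hdv Htau HT.
  exists (switch_control w v tau), (switch_path w v tau p), (tau + T).
  split; [apply switch_control_admissible; assumption|].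
  split; [apply switch_path_solution; assumption|split; [lra|]].
  rewrite switch_path_after by lra. f_equal. ring.
Qed.

Lemma Cset_forward_invariant p : Cset alpha b ul uh p ->
  exists u phi, admissible ul uh u /\ is_solution alpha b u p phi /\
    forall t, 0 <= t -> Cset alpha b ul uh (phi t).
Proof.
  intros [u [[Hu Hd] [Hx Hy]]]. unfold inG in Hx.
  exists (switch_control u u 0), (switch_path u u 0 p).
  split; [apply switch_control_admissible; assumption|].
  split; [apply switch_path_solution; lra|].
  intros t Ht. rewrite switch_path_same by reflexivity.
  exists u. split; [split; assumption|split].
  - unfold inG, flow; simpl. apply Rmult_lt_0_compat; [exact Hx|apply exp_pos].
  - pose proof (flow_deviation u p t) as Hdev. rewrite Hy in Hdev. lra.
Qed.

Lemma exists_controls_of_both_signs :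
  exists wm wp, ul <= wm <= uh /\ ul <= wp <= uh /\ b < wm * alpha < 0 /\ 0 < wp * alpha.
Proof.
  assert (Hhalf : b / (2 * alpha) * alpha = b / 2) by (field; exact Halpha).
  destruct (Rlt_or_le 0 alpha) as [Ha|Ha].
  - exists (Rmax ul (b / (2 * alpha))), uh.
    assert (b / (2 * alpha) < 0) by (apply Rdiv_neg_pos; lra).
    unfold Rmax. destruct Rle_dec; repeat split; nra.
  - assert (Ha' : alpha < 0) by lra.
    exists (Rmin uh (b / (2 * alpha))), ul.
    assert (0 < b / (2 * alpha)) by (apply Rdiv_neg_neg; lra).
    unfold Rmin. destruct Rle_dec; repeat split; nra.
Qed.

Lemma steer_fst wm wp p x1 :
  wm * alpha < 0 -> 0 < wp * alpha -> 0 < fst p -> 0 < x1 ->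
  exists w tau, (w = wm \/ w = wp) /\ 0 <= tau /\ fst (flow w p tau) = x1.
Proof.
  intros Hm Hp Hx Hx1.
  set (g := ln x1 - ln (fst p)).
  assert (Hw : exists w, (w = wm \/ w = wp) /\ w * alpha <> 0 /\ 0 <= g / (w * alpha)).
  { destruct (Rle_or_lt 0 g).
    - exists wp. split; [auto|split; [lra|]]. apply Rdiv_le_0_compat; lra.
    - exists wm. split; [auto|split; [lra|]]. left. apply Rdiv_neg_neg; lra. }
  destruct Hw as [w [Hw [Hw0 Htau]]].
  exists w, (g / (w * alpha)). split; [exact Hw|split; [exact Htau|]].
  unfold flow; simpl. replace (w * alpha * (g / (w * alpha))) with g
    by (field; split; intros E; apply Hw0; rewrite E; ring).
  unfold g, Rminus. rewrite exp_plus, exp_Ropp, !exp_ln by assumption. field. lra.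
Qed.

Lemma flow_deviation_bound w p tau m :
  0 <= fst p -> 0 <= tau ->
  Rabs (snd (flow w p tau) - m * fst (flow w p tau))
  <= (Rabs (m_u alpha b w) + Rabs m) * fst (flow w p tau)
     + Rabs (snd p) + Rabs (m_u alpha b w) * fst p.
Proof.
  intros Hx Htau. set (mw := m_u alpha b w).
  assert (Hx1 : 0 <= fst (flow w p tau))
    by (unfold flow; simpl; apply Rmult_le_pos; [exact Hx|left; apply exp_pos]).
  assert (He : exp (b * tau) <= 1) by (rewrite <- exp_0; apply exp_le_mono; nra).
  pose proof (exp_pos (b * tau)).
  replace (snd (flow w p tau) - m * fst (flow w p tau)) with
    ((mw - m) * fst (flow w p tau) + (snd p - mw * fst p) * exp (b * tau))
    by (pose proof (flow_deviation w p tau) as Hdev; fold mw in Hdev; lra).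
  eapply Rle_trans; [apply Rabs_triang|].
  rewrite !Rabs_mult, (Rabs_right (fst (flow w p tau))), (Rabs_right (exp (b * tau))) by lra.
  assert (Hdm : Rabs (mw - m) <= Rabs mw + Rabs m)
    by (unfold Rminus; rewrite <- (Rabs_Ropp m); apply Rabs_triang).
  assert (Hdp : Rabs (snd p - mw * fst p) <= Rabs (snd p) + Rabs mw * fst p)
    by (unfold Rminus; eapply Rle_trans; [apply Rabs_triang|];
        rewrite Rabs_Ropp, Rabs_mult, (Rabs_right (fst p)) by lra; lra).
  pose proof (Rabs_pos (snd p - mw * fst p)).
  assert (Rabs (mw - m) * fst (flow w p tau) <= (Rabs mw + Rabs m) * fst (flow w p tau))
    by (apply Rmult_le_compat_r; [exact Hx1|exact Hdm]).
  nra.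
Qed.

Lemma exists_time_exp_lt c delta : 0 < c -> 0 < delta ->
  exists T, 0 <= T /\ exp (- c * T) < delta.
Proof.
  intros Hc Hd. exists (Rmax 0 (- ln delta / c) + 1).
  split; [pose proof (Rmax_l 0 (- ln delta / c)); lra|].
  rewrite <- (exp_ln delta) at 2 by exact Hd. apply exp_increasing.
  assert (Hmax : - ln delta / c <= Rmax 0 (- ln delta / c)) by apply Rmax_r.
  apply Rmult_le_compat_l with (r := c) in Hmax; [|lra].
  replace (c * (- ln delta / c)) with (- ln delta) in Hmax by (field; lra).
  nra.
Qed.

Lemma switched_endpoint_estimate p q v w tau T M c :
  0 <= fst p -> 0 < fst q -> snd q = m_u alpha b v * fst q ->
  c <= v * alpha - b -> c <= - b -> 0 <= M -> 0 <= tau -> 0 <= T ->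
  Rabs (m_u alpha b w) + Rabs (m_u alpha b v) <= M ->
  fst (flow w p tau) = fst q * exp (- (v * alpha) * T) ->
  fst (flow v (flow w p tau) T) = fst q /\
  Rabs (snd (flow v (flow w p tau) T) - snd q)
  <= (M * fst q + Rabs (snd p) + M * fst p) * exp (- c * T).
Proof.
  intros Hxp Hxq Hyq Hcv Hcb HM Htau HT Hmw Hx1.
  pose proof (flow_deviation_bound w p tau (m_u alpha b v) Hxp Htau) as Hdev.
  set (p1 := flow w p tau) in *. set (x1 := fst q * exp (- (v * alpha) * T)) in *.
  assert (Hfst : fst (flow v p1 T) = fst q).
  { change (fst (flow v p1 T)) with (fst p1 * exp (v * alpha * T)). rewrite Hx1. unfold x1.
    rewrite Rmult_assoc, <- exp_plus.
    replace (- (v * alpha) * T + v * alpha * T) with 0 by ring. rewrite exp_0. ring. }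
  split; [exact Hfst|].
  replace (snd (flow v p1 T) - snd q) with ((snd p1 - m_u alpha b v * x1) * exp (b * T))
    by (rewrite <- Hx1, <- flow_deviation, Hfst, Hyq; ring).
  rewrite Hx1 in Hdev.
  assert (Hx1e : x1 * exp (b * T) <= fst q * exp (- c * T)).
  { unfold x1. rewrite Rmult_assoc, <- exp_plus.
    apply Rmult_le_compat_l; [lra|]. apply exp_le_mono. nra. }
  assert (He : exp (b * T) <= exp (- c * T)) by (apply exp_le_mono; nra).
  assert (Hx1pos : 0 < x1) by (unfold x1; apply Rmult_lt_0_compat; [exact Hxq|apply exp_pos]).
  pose proof (exp_pos (b * T)). pose proof (Rabs_pos (snd p)).
  pose proof (Rabs_pos (m_u alpha b v)).
  assert (Hdev' : Rabs (snd p1 - m_u alpha b v * x1) <= M * x1 + (Rabs (snd p) + M * fst p)).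
  { assert ((Rabs (m_u alpha b w) + Rabs (m_u alpha b v)) * x1 <= M * x1)
      by (apply Rmult_le_compat_r; lra).
    assert (Rabs (m_u alpha b w) * fst p <= M * fst p) by (apply Rmult_le_compat_r; lra).
    lra. }
  rewrite Rabs_mult, (Rabs_right (exp (b * T))) by lra.
  apply Rle_trans with ((M * x1 + (Rabs (snd p) + M * fst p)) * exp (b * T));
    [apply Rmult_le_compat_r; lra|].
  assert (M * (x1 * exp (b * T)) <= M * (fst q * exp (- c * T)))
    by (apply Rmult_le_compat_l; lra).
  assert ((Rabs (snd p) + M * fst p) * exp (b * T) <= (Rabs (snd p) + M * fst p) * exp (- c * T))
    by (apply Rmult_le_compat_l; nra).
  nra.
Qed.

Lemma Cset_in_closure_orbit p q : 0 < fst p -> Cset alpha b ul uh q ->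
  closureG (orbit_plus alpha b ul uh p) q.
Proof.
  intros Hx [v [[Hv Hvb] [Hxq Hyq]]]. unfold inG in Hxq.
  split; [exact Hxq|]. intros eps Heps.
  destruct exists_controls_of_both_signs as [wm [wp [Hwm [Hwp [Hm Hp]]]]].
  set (M := Rabs (m_u alpha b wm) + Rabs (m_u alpha b wp) + Rabs (m_u alpha b v)).
  set (A := M * fst q + Rabs (snd p) + M * fst p).
  set (c := Rmin (v * alpha - b) (- b)).
  pose proof (Rabs_pos (m_u alpha b wm)). pose proof (Rabs_pos (m_u alpha b wp)).
  pose proof (Rabs_pos (m_u alpha b v)). pose proof (Rabs_pos (snd p)).
  assert (HA : 0 <= A) by (unfold A, M; nra).
  destruct (exists_time_exp_lt c (eps / (A + 1))) as [T [HT HTe]];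
    [apply Rmin_glb_lt; lra | apply Rdiv_lt_0_compat; lra |].
  destruct (steer_fst wm wp p (fst q * exp (- (v * alpha) * T)) ltac:(lra) Hp Hx)
    as [w [tau [Hw [Htau Hx1]]]]; [apply Rmult_lt_0_compat; [exact Hxq|apply exp_pos]|].
  assert (Hmw : Rabs (m_u alpha b w) + Rabs (m_u alpha b v) <= M)
    by (unfold M; destruct Hw as [->| ->]; lra).
  destruct (switched_endpoint_estimate p q v w tau T M c ltac:(lra) Hxq Hyq
              (Rmin_l _ _) (Rmin_r _ _) ltac:(unfold M; lra) Htau HT Hmw Hx1) as [Hfst Hsnd].
  exists (flow v (flow w p tau) T). split.
  { apply orbit_switch; destruct Hw as [->| ->]; auto; lra. }
  rewrite Hfst, Rminus_diag, Rabs_R0. split; [exact Heps|].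
  apply Rmult_lt_compat_l with (r := A + 1) in HTe; [|lra].
  replace ((A + 1) * (eps / (A + 1))) with eps in HTe by (field; lra).
  pose proof (exp_pos (- c * T)). fold A in Hsnd. nra.
Qed.

Lemma Cset_control_set_conditions : control_set_conditions alpha b ul uh (Cset alpha b ul uh).
Proof.
  split; [|split].
  - intros p Hp. apply (proj1 (cone_of_Cset p Hp)).
  - exact Cset_forward_invariant.
  - intros p q Hp Hq. apply Cset_in_closure_orbit; [apply (cone_of_Cset p Hp)|exact Hq].
Qed.

Lemma closure_orbit_sub_Cset p q : Cset alpha b ul uh p ->
  closureG (orbit_plus alpha b ul uh p) q -> Cset alpha b ul uh q.
Proof.
  intros Hp Hq. apply Cset_of_cone, (cone_closure (orbit_plus alpha b ul uh p) q); [|exact Hq].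
  intros s Hs. exact (cone_orbit_invariant p s (cone_of_Cset p Hp) Hs).
Qed.

Lemma control_set_conditions_sub_Cset (D : pt -> Prop) :
  control_set_conditions alpha b ul uh D -> forall p, D p -> Cset alpha b ul uh p.
Proof. intros HD p Hp. exact (Cset_of_cone p (control_set_conditions_sub_cone D HD p Hp)). Qed.

End System.

Theorem mainTheorem10 (alpha b ul uh : R)
  (Halpha : alpha <> 0) (Hb : b < 0) (Hul : ul < 0) (Huh : 0 < uh) :
  is_control_set alpha b ul uh (Cset alpha b ul uh) /\
  (forall D, is_control_set alpha b ul uh D ->
     forall p, D p <-> Cset alpha b ul uh p) /\
  (forall p, Cset alpha b ul uh p ->
     forall q, Cset alpha b ul uh q <-> closureG (orbit_plus alpha b ul uh p) q).
Proof.
  pose proof (Cset_control_set_conditions alpha b ul uh Hb Hul Huh Halpha) as HC.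
  pose proof (control_set_conditions_sub_Cset alpha b ul uh Hb Hul Huh Halpha) as Hsub.
  split; [|split].
  - split; [exact HC|]. intros D HD _. exact (Hsub D HD).
  - intros D [HD Hmax] p. split; [exact (Hsub D HD p)|].
    exact (Hmax _ HC (Hsub D HD) p).
  - intros p Hp q. split.
    + apply (Cset_in_closure_orbit alpha b ul uh Hb Hul Huh Halpha).
      exact (proj1 (cone_of_Cset alpha b ul uh Hb p Hp)).
    + exact (closure_orbit_sub_Cset alpha b ul uh Hb Hul Huh Halpha p q Hp).
Qed.
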